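(* Let $\mathcal{M}_1=(E_1,\mathcal{B}_1)$ and $\mathcal{M}_2=(E_2,\mathcal{B}_2)$ be matroids with $E_1\cap E_2=\{p\}$, where $p$ is not a coloop of both. Let $E_1\uplus E_2=(E_1\cup E_2\cup\{p_1,p_2\})\setminus\{p\}$, where $p_i$ plays the role of $p$ in $E_i$, so that $P_{\mathcal{M}_1}\times P_{\mathcal{M}_2}\subset\mathbb{R}^{E_1\uplus E_2}$. Then the base polytope of the series connection $\mathcal{S}(\mathcal{M}_1,\mathcal{M}_2)$ is linearly isomorphic to $(P_{\mathcal{M}_1}\times P_{\mathcal{M}_2})\cap\{x\in\mathbb{R}^{E_1\uplus E_2}: x_{p_1}+x_{p_2}\le 1\}$.
   Context: For a matroid $\mathcal{M}=(E,\mathcal{B})$, the base polytope is $P_{\mathcal{M}}=\operatorname{conv}\{\mathbf{1}_B:B\in\mathcal{B}\}\subset\mathbb{R}^E$. For $\mathcal{M}_1,\mathcal{M}_2$ as in the claim, the series connection $\mathcal{S}(\mathcal{M}_1,\mathcal{M}_2)$ is the matroid on $E_1\cup E_2$ with bases $\{B_1\cup B_2: B_1\in\mathcal{B}_1, B_2\in\mathcal{B}_2, B_1\cap B_2=\emptyset\}$. *)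

From HB Require Import structures.
From mathcomp Require Import all_boot all_order all_algebra.
Set Implicit Arguments. Unset Strict Implicit. Unset Printing Implicit Defensive.
Import Order.TTheory GRing.Theory Num.Theory.
Local Open Scope ring_scope.

Definition is_matroid (T : finType) (E : {set T}) (Bs : {set {set T}}) : Prop :=
  [/\ Bs != set0,
      (forall B, B \in Bs -> B \subset E) &
      (forall B1 B2, B1 \in Bs -> B2 \in Bs -> forall x, x \in B1 :\: B2 ->
         exists2 y, y \in B2 :\: B1 & y |: (B1 :\ x) \in Bs)].

Definition is_coloop (T : finType) (Bs : {set {set T}}) (p : T) : Prop :=
  forall B, B \in Bs -> p \in B.

Definition series_bases (T : finType) (Bs1 Bs2 : {set {set T}}) : {set {set T}} :=
  [set B1 :|: B2 | B1 in Bs1, B2 in Bs2 & [disjoint B1 & B2]].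

Definition conv (R : numDomainType) (V : lmodType R) (S : seq V) : V -> Prop :=
  fun x => exists w : V -> R,
    [/\ forall v, 0 <= w v, \sum_(v <- S) w v = 1 & x = \sum_(v <- S) w v *: v].

Definition indic (R : numDomainType) (T : finType) (E : {set T}) (B : {set T})
  : {ffun {x : T | x \in E} -> R^o} := [ffun x => ((val x \in B)%:R : R)].

Definition base_polytope (R : numDomainType) (T : finType) (E : {set T})
  (Bs : {set {set T}}) : {ffun {x : T | x \in E} -> R^o} -> Prop :=
  conv [seq indic R E B | B <- enum Bs].

(* R^(E1 ⊎ E2): coordinates indexed by the disjoint union of E1 and E2, so the
   copy of p in E1 is p1 = inl p and its copy in E2 is p2 = inr p. *)
Definition dsum_vec (R : numDomainType) (T : finType) (E1 E2 : {set T}) :=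
  {ffun ({x : T | x \in E1} + {x : T | x \in E2})%type -> R^o}.

Definition prod_cut (R : numDomainType) (T : finType) (E1 E2 : {set T})
  (P1 : {ffun {x : T | x \in E1} -> R^o} -> Prop)
  (P2 : {ffun {x : T | x \in E2} -> R^o} -> Prop)
  (p1 : {x : T | x \in E1}) (p2 : {x : T | x \in E2}) : dsum_vec R E1 E2 -> Prop :=
  fun x => [/\ P1 [ffun e => x (inl e)], P2 [ffun e => x (inr e)]
             & (x (inl p1) : R) + (x (inr p2) : R) <= 1].

Definition lin_iso (R : numDomainType) (U V : lmodType R) (P : U -> Prop) (Q : V -> Prop)
  : Prop :=
  exists f : U -> V,
    [/\ forall a u v, f (a *: u + v) = a *: f u + f v,
        forall x y, P x -> P y -> f x = f y -> x = y &
        forall y, Q y <-> exists2 x, P x & f x = y].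

Arguments base_polytope R {T} E Bs _.
Arguments indic R {T} E B.

From HB Require Import structures.
From mathcomp Require Import all_boot all_order all_algebra ring lra.
Set Implicit Arguments. Unset Strict Implicit. Unset Printing Implicit Defensive.
Import Order.TTheory GRing.Theory Num.Theory.
Local Open Scope ring_scope.

(* The map [f] keeps every coordinate of [x] outside [p] and sets
   [f x p_i = r_i / (r_1 + r_2) * \sum x - \sum_(E_i :\ p) x], with [r_i] the
   rank of [M_i]. It sends the vertex [1_(B1 :|: B2)] of the series polytope to
   [(1_B1, 1_B2)], and it is injective on the polytope because [\sum x] is the
   constant [r_1 + r_2] there; as [B1] and [B2] are disjoint, the image lies
   below the cut [x_p1 + x_p2 <= 1].
   Conversely, a point of the cut is [(\sum a B1 1_B1, \sum b B2 1_B2)] for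
   probability weights [a], [b] whose masses [al], [be] on the bases containing
   [p] satisfy [al + be <= 1]. This is exactly the condition for a coupling of
   [a] and [b] that avoids the pairs of bases both containing [p]; any other
   pair of bases is disjoint, so the coupling is a convex combination of
   vertices of the series polytope mapped onto the given point. *)

Lemma sum_indicator (R : pzSemiRingType) (T : finType) (A : {set T}) :
  \sum_(t : T) ((t \in A)%:R : R) = #|A|%:R.
Proof.
rewrite -natr_sum -sum1_card [in RHS]big_mkcond /=.
by congr (_ %:R); apply: eq_bigr => t _; case: (t \in A).
Qed.

Section Indicators.
Variables (R : numDomainType) (T : finType) (E : {set T}).
Local Notation vec := {ffun {x : T | x \in E} -> R^o}.

Definition ext0 (x : vec) (t : T) : R := if insub t is Some u then x u else 0.

Lemma ext0_val (x : vec) u : ext0 x (val u) = x u.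
Proof. by rewrite /ext0 valK. Qed.

Lemma ext0_indic (B : {set T}) t : B \subset E -> ext0 (indic R E B) t = (t \in B)%:R.
Proof.
move=> sBE; rewrite /ext0; case: insubP => [u _ <-|tE]; first by rewrite ffunE.
by case tB: (t \in B); rewrite // (subsetP sBE) in tE.
Qed.

Lemma ext0_linear a (u v : vec) t : ext0 (a *: u + v) t = a * ext0 u t + ext0 v t.
Proof. by rewrite /ext0; case: insubP => [w _ _|_]; rewrite ?ffunE ?mulr0 ?addr0. Qed.

Lemma ext0_sum (I : finType) (P : pred I) (c : I -> R) (F : I -> vec) t :
  ext0 (\sum_(i | P i) c i *: F i) t = \sum_(i | P i) c i * ext0 (F i) t.
Proof.
rewrite /ext0; case: insubP => [w _ _|_]; last by rewrite big1 // => i _; rewrite mulr0.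
by rewrite sum_ffunE; apply: eq_bigr => i _; rewrite ffunE.
Qed.

Lemma indic_inj (B B' : {set T}) :
  B \subset E -> B' \subset E -> indic R E B = indic R E B' -> B = B'.
Proof.
move=> sBE sB'E eqBB'; apply/setP => t.
have := congr1 (ext0^~ t) eqBB'; rewrite !ext0_indic //.
by move/eqP; rewrite eqr_nat; case: (t \in B); case: (t \in B').
Qed.

Variable Bs : {set {set T}}.
Hypothesis sub_bases : forall B, B \in Bs -> B \subset E.

Definition conv_bases (x : vec) : Prop :=
  exists c : {set T} -> R, [/\ forall B, 0 <= c B, \sum_(B in Bs) c B = 1 &
     x = \sum_(B in Bs) c B *: indic R E B].

Lemma base_polytopeE x : base_polytope R E Bs x <-> conv_bases x.
Proof.
split=> [[w [w0 w1 ->]]|[c [c0 c1 ->]]].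
  by exists (fun B => w (indic R E B)); rewrite -w1 !big_map !big_enum.
pose w v := if [pick B in Bs | indic R E B == v] is Some B then c B else 0.
have wE B : B \in Bs -> w (indic R E B) = c B.
  move=> BBs; rewrite /w; case: pickP => [B' /andP[B'Bs /eqP eqB]|/(_ B)].
    by rewrite (indic_inj (sub_bases B'Bs) (sub_bases BBs) eqB).
  by rewrite BBs eqxx.
exists w; rewrite !big_map !big_enum; split.
- by move=> v; rewrite /w; case: pickP.
- by rewrite -c1; apply: eq_bigr => B /wE.
- by apply: eq_bigr => B /wE ->.
Qed.

Lemma conv_bases_comb (I : finType) (P : pred I) (c : I -> R) (h : I -> {set T}) :
  (forall i, P i -> h i \in Bs) -> (forall i, 0 <= c i) -> \sum_(i | P i) c i = 1 ->
  conv_bases (\sum_(i | P i) c i *: indic R E (h i)).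
Proof.
move=> hBs c0 c1; exists (fun B => \sum_(i | P i && (h i == B)) c i); split.
- by move=> B; apply: sumr_ge0.
- by rewrite -c1 (partition_big h (mem Bs)).
- rewrite (partition_big h (mem Bs)) //; apply: eq_bigr => B _.
  by rewrite scaler_suml; apply: eq_bigr => i /andP[_ /eqP ->].
Qed.

Lemma conv_bases_sum n x :
  (forall B, B \in Bs -> #|B| = n) -> conv_bases x -> \sum_(t : T) ext0 x t = n%:R.
Proof.
move=> cardB [c [_ c1 ->]].
rewrite (eq_bigr _ (fun t _ => ext0_sum _ c _ t)) exchange_big /=.
rewrite -[RHS]mul1r -[X in X * _]c1 mulr_suml; apply: eq_bigr => B BBs.
rewrite -mulr_sumr -(cardB B) // -sum_indicator; congr (_ * _).
by apply: eq_bigr => t _; rewrite ext0_indic // sub_bases.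
Qed.

End Indicators.

Section MatroidRank.
Variables (T : finType) (E : {set T}) (Bs : {set {set T}}).
Hypothesis M : is_matroid E Bs.

Lemma matroid_basis_sub B : B \in Bs -> B \subset E.
Proof. by case: M => _ sub _; apply: sub. Qed.

Lemma card_bases_eq B1 B2 : B1 \in Bs -> B2 \in Bs -> #|B1| = #|B2|.
Proof.
case: M => _ _ exchange.
move: {2}#|B1 :\: B2| (erefl #|B1 :\: B2|) => n; elim: n B1 B2 => [|n IHn] B1 B2.
  move/eqP; rewrite cards_eq0 setD_eq0 => sB12 B1Bs B2Bs.
  have [/eqP|[x xB21]] := set_0Vmem (B2 :\: B1).
    by rewrite setD_eq0 => sB21; rewrite (eqP (_ : B1 == B2)) // eqEsubset sB12.
  have [y /setDP[yB1 yB2] _] := exchange _ _ B2Bs B1Bs x xB21.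
  by rewrite (subsetP sB12 _ yB1) in yB2.
move=> cardD B1Bs B2Bs.
have [x xB12] : exists x, x \in B1 :\: B2 by apply/set0Pn; rewrite -card_gt0 cardD.
have [y yB21 B1'Bs] := exchange _ _ B1Bs B2Bs x xB12.
move: xB12 yB21; rewrite !inE => /andP[xB2 xB1] /andP[yB1 yB2].
rewrite -(IHn (y |: B1 :\ x) B2) //.
  by rewrite cardsU1 !inE (negbTE yB1) andbF (cardsD1 x B1) xB1.
have -> : (y |: B1 :\ x) :\: B2 = (B1 :\: B2) :\ x.
  apply/setP => t; rewrite !inE; case: (eqVneq t y) => [->|_] /=.
    by rewrite yB2 andbF.
  by case: (t \in B2); case: (t != x).
by move: cardD; rewrite (cardsD1 x (B1 :\: B2)) !inE xB2 xB1 => -[].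
Qed.

Definition rk : nat := if [pick B in Bs] is Some B then #|B| else 0.

Lemma card_basis B : B \in Bs -> #|B| = rk.
Proof.
move=> BBs; rewrite /rk; case: pickP => [B' /(card_bases_eq BBs) //|/(_ B)].
by rewrite BBs.
Qed.

End MatroidRank.

Section Projection.
Variables (R : numFieldType) (T : finType) (E : {set T}) (p : T).
Local Notation vec := {ffun {x : T | x \in E} -> R^o}.

Definition proj_coord (Ea : {set T}) (r rt : nat) (x : vec) (e : {x : T | x \in Ea}) : R :=
  if val e == p then r%:R / rt%:R * \sum_(t : T) ext0 x t - \sum_(t in Ea :\ p) ext0 x t
  else ext0 x (val e).
Arguments proj_coord : clear implicits.

Lemma proj_coord_linear Ea r rt a (u v : vec) e :
  proj_coord Ea r rt (a *: u + v) e = a * proj_coord Ea r rt u e + proj_coord Ea r rt v e.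
Proof.
rewrite /proj_coord; case: ifP => _; last exact: ext0_linear.
rewrite !(eq_bigr _ (fun t _ => ext0_linear a u v t)) !big_split /= -!mulr_sumr.
ring.
Qed.

Lemma proj_coord_sum Ea r rt (I : finType) (P : pred I) (c : I -> R) (F : I -> vec) e :
  proj_coord Ea r rt (\sum_(i | P i) c i *: F i) e
  = \sum_(i | P i) c i * proj_coord Ea r rt (F i) e.
Proof.
rewrite /proj_coord; case: ifP => _; last exact: ext0_sum.
rewrite !(eq_bigr _ (fun t _ => ext0_sum P c F t)).
rewrite [X in _ * X]exchange_big [X in _ - X]exchange_big /=.
rewrite mulr_sumr -sumrB; apply: eq_bigr => i _.
by rewrite -!mulr_sumr mulrBr mulrCA.
Qed.

Lemma proj_coord_indic (Ea Ba Bb : {set T}) e :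
  Ba :|: Bb \subset E -> Ba \subset Ea -> (forall t, t \in Ea -> t \in Bb -> t = p) ->
  proj_coord Ea #|Ba| #|Ba :|: Bb| (indic R E (Ba :|: Bb)) e = (val e \in Ba)%:R.
Proof.
move=> sBE sBaEa EaBb_p; rewrite /proj_coord.
have BaEa_B t : t \in Ea -> t != p -> (t \in Ba :|: Bb) = (t \in Ba).
  move=> tEa tp; rewrite inE; case: (t \in Ba) => //=.
  by apply: contraNF tp => /(EaBb_p _ tEa) ->.
case: eqP => [ep|/eqP ep]; last by rewrite (ext0_indic _ _ sBE) BaEa_B // (valP e).
rewrite (eq_bigr _ (fun t _ => ext0_indic _ t sBE)) sum_indicator.
have -> : \sum_(t in Ea :\ p) ext0 (indic R E (Ba :|: Bb)) t = #|Ba :\ p|%:R.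
  rewrite -sum_indicator big_mkcond; apply: eq_bigr => t _.
  rewrite (ext0_indic _ _ sBE) !in_setD1; case: eqP => //= /eqP tp.
  case tEa: (t \in Ea); first by rewrite BaEa_B.
  by case tBa: (t \in Ba); rewrite // (subsetP sBaEa) in tEa.
have -> : #|Ba|%:R / #|Ba :|: Bb|%:R * #|Ba :|: Bb|%:R = #|Ba|%:R :> R.
  have [B0|Bpos] := posnP #|Ba :|: Bb|; last by rewrite mulfVK ?pnatr_eq0 -?lt0n.
  have : (#|Ba| <= 0)%N by rewrite -B0 subset_leq_card ?subsetUl.
  by rewrite leqn0 B0 => /eqP ->; rewrite !mul0r.
by rewrite (cardsD1 p Ba) natrD addrK -ep.
Qed.

Definition series_proj (E1 E2 : {set T}) (r1 r2 : nat) (x : vec) : dsum_vec R E1 E2 :=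
  [ffun s => match s with
             | inl e => proj_coord E1 r1 (r1 + r2) x e
             | inr e => proj_coord E2 r2 (r1 + r2) x e end].

Lemma series_proj_linear E1 E2 r1 r2 a (u v : vec) :
  series_proj E1 E2 r1 r2 (a *: u + v)
  = a *: series_proj E1 E2 r1 r2 u + series_proj E1 E2 r1 r2 v.
Proof. by apply/ffunP => -[e|e]; rewrite !ffunE proj_coord_linear. Qed.

Lemma series_proj_sum E1 E2 r1 r2 (I : finType) (P : pred I) (c : I -> R) (F : I -> vec) :
  series_proj E1 E2 r1 r2 (\sum_(i | P i) c i *: F i)
  = \sum_(i | P i) c i *: series_proj E1 E2 r1 r2 (F i).
Proof.
apply/ffunP => -[e|e]; rewrite ffunE sum_ffunE proj_coord_sum;
  by apply: eq_bigr => i _; rewrite !ffunE.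
Qed.

End Projection.

Section Coupling.
Variables (R : realFieldType) (I : finType).
Implicit Types (A : pred I) (a b : I -> R) (q : pred I).

Definition mass (A : pred I) (a : I -> R) (q : pred I) : R := \sum_(j | A j) a j * (q j)%:R.

Lemma mass_ge0 A a q : (forall j, 0 <= a j) -> 0 <= mass A a q.
Proof. by move=> a0; apply: sumr_ge0 => j _; rewrite mulr_ge0. Qed.

Lemma sum_by_pred A a q (F : bool -> R) :
  \sum_(j | A j) a j = 1 ->
  \sum_(j | A j) a j * F (q j) = mass A a q * F true + (1 - mass A a q) * F false.
Proof.
move=> a1; have -> : 1 - mass A a q = \sum_(j | A j) (a j - a j * (q j)%:R).
  by rewrite sumrB a1.
rewrite /mass !mulr_suml -big_split; apply: eq_bigr => j _.
by case: (q j); rewrite /= ?mulr1 ?mulr0 ?subrr ?subr0 ?mul0r ?addr0 ?add0r.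
Qed.

Lemma le_mass A a q i :
  (forall j, 0 <= a j) -> \sum_(j | A j) a j = 1 -> A i ->
  a i <= (if q i then mass A a q else 1 - mass A a q).
Proof.
move=> a0 a1 Ai; have := sum_by_pred q (fun v => (v == q i)%:R) a1.
rewrite (bigD1 i Ai) /= eqxx mulr1.
case: (q i); rewrite /= ?mulr1 ?mulr0 ?addr0 ?add0r => <-;
  by rewrite lerDl sumr_ge0 // => j _; rewrite mulr_ge0.
Qed.

(* The weight of the pair [(i, j)] in the coupling of [a] and [b] is
   [a i * b j * coupling_factor (q i) (q j) (mass a) (mass b)]: pairs where
   both [q i] and [q j] hold get no weight, and the other factors rescale the
   product measure so that both marginals are preserved. *)
Definition coupling_factor (u v : bool) (al be : R) : R :=
  if u then (if v then 0 else (1 - be)^-1)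
  else if v then (1 - al)^-1 else (1 - al - be) / ((1 - al) * (1 - be)).

Lemma coupling_factor_sym u v al be : coupling_factor u v al be = coupling_factor v u be al.
Proof.
by case: u; case: v; rewrite //= (mulrC (1 - be)) (addrAC 1 (- be)).
Qed.

Lemma coupling_factor_ge0 u v al be :
  0 <= al -> 0 <= be -> al + be <= 1 -> 0 <= coupling_factor u v al be.
Proof.
move=> al0 be0 cut; have al1 : 0 <= 1 - al by lra.
have be1 : 0 <= 1 - be by lra.
case: u; case: v; rewrite /= ?invr_ge0 //.
by rewrite divr_ge0 ?mulr_ge0 //; lra.
Qed.

Lemma coupling_factor_balance u al be ai :
  0 <= al -> 0 <= be -> al + be <= 1 -> 0 <= ai -> ai <= (if u then al else 1 - al) ->
  ai * (be * coupling_factor u true al be + (1 - be) * coupling_factor u false al be) = ai.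
Proof.
move=> al0 be0 cut ai0; case: u => /= ai_le.
  have [be1|be1] := eqVneq be 1.
    have -> : ai = 0 by lra.
    by rewrite mul0r.
  by rewrite mulr0 add0r divff ?mulr1 // subr_eq0 eq_sym.
have [al1|al1] := eqVneq al 1.
  have -> : ai = 0 by lra.
  by rewrite mul0r.
have [be1|be1] := eqVneq be 1.
  have al0' : al = 0 by lra.
  by rewrite be1 al0' subrr !subr0 invr1 mul0r addr0 !mulr1.
have al1' : 1 - al != 0 by rewrite subr_eq0 eq_sym.
have be1' : 1 - be != 0 by rewrite subr_eq0 eq_sym.
rewrite [X in _ * X](_ : _ = 1) ?mulr1 //.
by field; apply/andP.
Qed.

Lemma coupling_row_sum A1 A2 a b q i :
  (forall j, 0 <= a j) -> (forall j, 0 <= b j) ->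
  \sum_(j | A1 j) a j = 1 -> \sum_(j | A2 j) b j = 1 ->
  mass A1 a q + mass A2 b q <= 1 -> A1 i ->
  \sum_(j | A2 j) a i * b j * coupling_factor (q i) (q j) (mass A1 a q) (mass A2 b q) = a i.
Proof.
move=> a0 b0 a1 b1 cut A1i; under eq_bigr do rewrite -mulrA.
rewrite -mulr_sumr (sum_by_pred q (fun v => coupling_factor (q i) v _ _) b1).
by apply: coupling_factor_balance; rewrite ?mass_ge0 ?le_mass.
Qed.

Lemma coupling_col_sum A1 A2 a b q j :
  (forall i, 0 <= a i) -> (forall j, 0 <= b j) ->
  \sum_(i | A1 i) a i = 1 -> \sum_(j | A2 j) b j = 1 ->
  mass A1 a q + mass A2 b q <= 1 -> A2 j ->
  \sum_(i | A1 i) a i * b j * coupling_factor (q i) (q j) (mass A1 a q) (mass A2 b q) = b j.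
Proof.
move=> a0 b0 a1 b1 cut A2j; rewrite -[RHS](coupling_row_sum (q := q) b0 a0 b1 a1 _ A2j).
  by apply: eq_bigr => i _; rewrite coupling_factor_sym (mulrC (a i)).
by rewrite addrC.
Qed.

End Coupling.

Section DisjointSum.
Variables (R : numDomainType) (T : finType) (E1 E2 : {set T}).
Local Notation dvec := (dsum_vec R E1 E2).

Definition pair_indic (B1 B2 : {set T}) : dvec :=
  [ffun s => match s with inl e => indic R E1 B1 e | inr e => indic R E2 B2 e end].

Lemma dsum_vecP (x y : dvec) :
  [ffun e => x (inl e)] = [ffun e => y (inl e)] ->
  [ffun e => x (inr e)] = [ffun e => y (inr e)] -> x = y.
Proof.
by move=> /ffunP xy_l /ffunP xy_r; apply/ffunP => -[e|e];
  [have := xy_l e | have := xy_r e]; rewrite !ffunE.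
Qed.

Lemma sum_inl (I : finType) (P : pred I) (c : I -> R) (F : I -> dvec) :
  [ffun e => (\sum_(i | P i) c i *: F i) (inl e)]
  = \sum_(i | P i) c i *: [ffun e => F i (inl e)].
Proof.
by apply/ffunP => e; rewrite !ffunE !sum_ffunE; apply: eq_bigr => i _; rewrite !ffunE.
Qed.

Lemma sum_inr (I : finType) (P : pred I) (c : I -> R) (F : I -> dvec) :
  [ffun e => (\sum_(i | P i) c i *: F i) (inr e)]
  = \sum_(i | P i) c i *: [ffun e => F i (inr e)].
Proof.
by apply/ffunP => e; rewrite !ffunE !sum_ffunE; apply: eq_bigr => i _; rewrite !ffunE.
Qed.

Lemma pair_indic_inl (B1 B2 : {set T}) : [ffun e => pair_indic B1 B2 (inl e)] = indic R E1 B1.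
Proof. by apply/ffunP => e; rewrite !ffunE. Qed.

Lemma pair_indic_inr (B1 B2 : {set T}) : [ffun e => pair_indic B1 B2 (inr e)] = indic R E2 B2.
Proof. by apply/ffunP => e; rewrite !ffunE. Qed.

Lemma pair_indic_cut (B1 B2 : {set T}) e1 e2 : [disjoint B1 & B2] -> val e1 = val e2 ->
  pair_indic B1 B2 (inl e1) + pair_indic B1 B2 (inr e2) <= 1.
Proof.
move=> dis e12; rewrite !ffunE -e12.
have [eB1|] := boolP (val e1 \in B1); last by rewrite add0r; case: (_ \in B2).
by rewrite (disjointFr dis eB1) addr0.
Qed.

End DisjointSum.

Section SeriesBases.
Variables (T : finType) (Bs1 Bs2 : {set {set T}}).

Definition series_pair (B12 : {set T} * {set T}) : bool :=
  [&& B12.1 \in Bs1, B12.2 \in Bs2 & [disjoint B12.1 & B12.2]].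

Lemma series_pair_basis B12 : series_pair B12 -> B12.1 :|: B12.2 \in series_bases Bs1 Bs2.
Proof.
by case/and3P=> B1Bs B2Bs dis; apply/imset2P; exists B12.1 B12.2; rewrite ?inE ?B2Bs.
Qed.

Definition series_split (B : {set T}) : {set T} * {set T} :=
  odflt (set0, set0) [pick B12 | series_pair B12 && (B == B12.1 :|: B12.2)].

Lemma series_splitP B : B \in series_bases Bs1 Bs2 ->
  series_pair (series_split B) /\ B = (series_split B).1 :|: (series_split B).2.
Proof.
rewrite /series_split; case: pickP => [B12 /andP[sp /eqP ->] //|none].
case/imset2P=> B1 B2 B1Bs; rewrite inE => /andP[B2Bs dis] eB.
by have := none (B1, B2); rewrite /series_pair /= B1Bs B2Bs dis eB eqxx.
Qed.

Variables (E1 E2 : {set T}) (p : T).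
Hypotheses (M1 : is_matroid E1 Bs1) (M2 : is_matroid E2 Bs2) (E12 : E1 :&: E2 = [set p]).

Lemma series_basis_sub B : B \in series_bases Bs1 Bs2 -> B \subset E1 :|: E2.
Proof.
case/imset2P=> B1 B2 B1Bs; rewrite inE => /andP[B2Bs _] ->.
by rewrite setUSS ?(matroid_basis_sub M1) ?(matroid_basis_sub M2).
Qed.

Lemma card_series_pair B12 : series_pair B12 -> #|B12.1 :|: B12.2| = (rk Bs1 + rk Bs2)%N.
Proof.
case/and3P=> B1Bs B2Bs dis; have := cardsUI B12.1 B12.2.
by rewrite (disjoint_setI0 dis) cards0 addn0 (card_basis M1 B1Bs) (card_basis M2 B2Bs).
Qed.

Lemma card_series_basis B : B \in series_bases Bs1 Bs2 -> #|B| = (rk Bs1 + rk Bs2)%N.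
Proof. by case/series_splitP=> sp ->; apply: card_series_pair. Qed.

Lemma meet_bases_at (B1 B2 : {set T}) : B1 \in Bs1 -> B2 \in Bs2 -> ~~ [disjoint B1 & B2] ->
  (p \in B1) && (p \in B2).
Proof.
move=> B1Bs B2Bs; rewrite -setI_eq0 => /set0Pn[t /setIP[tB1 tB2]].
suff <- : t = p by rewrite tB1 tB2.
apply/set1P; rewrite -E12 inE.
by rewrite (subsetP (matroid_basis_sub M1 B1Bs)) ?(subsetP (matroid_basis_sub M2 B2Bs)).
Qed.

End SeriesBases.

Section SeriesProjection.
Variables (R : numFieldType) (T : finType) (E1 E2 : {set T}) (Bs1 Bs2 : {set {set T}}).
Variable p : T.
Hypotheses (M1 : is_matroid E1 Bs1) (M2 : is_matroid E2 Bs2) (E12 : E1 :&: E2 = [set p]).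
Local Notation f := (series_proj p E1 E2 (rk Bs1) (rk Bs2)).
Local Notation vec := {ffun {x : T | x \in E1 :|: E2} -> R^o}.
Local Notation PS := (base_polytope R (E1 :|: E2) (series_bases Bs1 Bs2)).

Lemma series_proj_indic B12 : series_pair Bs1 Bs2 B12 ->
  f (indic R (E1 :|: E2) (B12.1 :|: B12.2)) = pair_indic R E1 E2 B12.1 B12.2.
Proof.
move=> sp; have cardB := card_series_pair M1 M2 sp.
case/and3P: sp => B1Bs B2Bs _.
have sB : B12.1 :|: B12.2 \subset E1 :|: E2.
  by rewrite setUSS ?(matroid_basis_sub M1) ?(matroid_basis_sub M2).
have at_p t : t \in E1 -> t \in E2 -> t = p by move=> t1 t2; apply/set1P; rewrite -E12 inE t1.
apply/ffunP => -[e|e]; rewrite !ffunE.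
  rewrite -cardB -(card_basis M1 B1Bs) proj_coord_indic //.
    exact: matroid_basis_sub M1 _ B1Bs.
  by move=> t tE1 /(subsetP (matroid_basis_sub M2 B2Bs)); apply: at_p.
rewrite -cardB -(card_basis M2 B2Bs) [B12.1 :|: _]setUC proj_coord_indic // 1?setUC //.
  exact: matroid_basis_sub M2 _ B2Bs.
by move=> t tE2 /(subsetP (matroid_basis_sub M1 B1Bs)) tE1; apply: at_p.
Qed.

Lemma series_proj_eq_off_p (x y : vec) t : f x = f y -> t != p -> ext0 x t = ext0 y t.
Proof.
move=> /ffunP fxy tp.
have [tE1|tE1] := boolP (t \in E1).
  by have := fxy (inl (exist _ t tE1)); rewrite !ffunE /proj_coord /= (negbTE tp).
have [tE2|tE2] := boolP (t \in E2).
  by have := fxy (inr (exist _ t tE2)); rewrite !ffunE /proj_coord /= (negbTE tp).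
by rewrite /ext0; case: insubP => // u; rewrite inE (negbTE tE1) (negbTE tE2).
Qed.

Lemma series_proj_inj (x y : vec) : PS x -> PS y -> f x = f y -> x = y.
Proof.
have sub := series_basis_sub M1 M2.
move=> /(base_polytopeE sub) Px /(base_polytopeE sub) Py fxy.
have off_p := series_proj_eq_off_p fxy.
have at_p : ext0 x p = ext0 y p.
  have := conv_bases_sum sub (card_series_basis M1 M2) Px.
  rewrite -(conv_bases_sum sub (card_series_basis M1 M2) Py).
  rewrite (bigD1 p) // [X in _ = X -> _](bigD1 p) //=.
  by rewrite (eq_bigr _ (fun t => off_p t)) => /addIr.
by apply/ffunP => u; rewrite -!ext0_val; case: (eqVneq (val u) p) => [->|/off_p].
Qed.

Lemma series_proj_cut (p1 : {x : T | x \in E1}) (p2 : {x : T | x \in E2}) (x : vec) :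
  val p1 = p -> val p2 = p -> PS x ->
  prod_cut (base_polytope R E1 Bs1) (base_polytope R E2 Bs2) p1 p2 (f x).
Proof.
move=> vp1 vp2 /(base_polytopeE (series_basis_sub M1 M2)) [c [c0 c1 ->]].
set S := series_bases Bs1 Bs2; pose s := series_split Bs1 Bs2.
have -> : f (\sum_(B in S) c B *: indic R (E1 :|: E2) B)
          = \sum_(B in S) c B *: pair_indic R E1 E2 (s B).1 (s B).2.
  rewrite series_proj_sum; apply: eq_bigr => B /series_splitP[sp eB].
  by rewrite -series_proj_indic // -eB.
split; rewrite ?sum_inl ?sum_inr.
- under eq_bigr do rewrite pair_indic_inl.
  apply/(base_polytopeE (matroid_basis_sub M1)); apply: conv_bases_comb => //.
  by move=> B /series_splitP[/and3P[]].
- under eq_bigr do rewrite pair_indic_inr.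
  apply/(base_polytopeE (matroid_basis_sub M2)); apply: conv_bases_comb => //.
  by move=> B /series_splitP[/and3P[]].
rewrite !sum_ffunE -big_split /= -c1 ler_sum // => B /series_splitP[/and3P[_ _ dis] _].
have := pair_indic_cut R (e1 := p1) (e2 := p2) dis; rewrite vp1 vp2 => /(_ erefl).
by rewrite !ffunE /= -mulrDr => cut; apply: ler_piMr.
Qed.

End SeriesProjection.

Section SeriesOnto.
Variables (R : realFieldType) (T : finType) (E1 E2 : {set T}) (Bs1 Bs2 : {set {set T}}).
Variable p : T.
Hypotheses (M1 : is_matroid E1 Bs1) (M2 : is_matroid E2 Bs2) (E12 : E1 :&: E2 = [set p]).
Local Notation f := (series_proj p E1 E2 (rk Bs1) (rk Bs2)).
Local Notation in1 := (fun B : {set T} => B \in Bs1).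
Local Notation in2 := (fun B : {set T} => B \in Bs2).
Local Notation has_p := (fun B : {set T} => p \in B).

Variables (a b : {set T} -> R).
Hypotheses (a0 : forall B, 0 <= a B) (b0 : forall B, 0 <= b B).
Hypotheses (a1 : \sum_(B in Bs1) a B = 1) (b1 : \sum_(B in Bs2) b B = 1).
Hypothesis mass_cut : mass in1 a has_p + mass in2 b has_p <= 1.

Let w (B12 : {set T} * {set T}) : R :=
  a B12.1 * b B12.2 *
  coupling_factor (p \in B12.1) (p \in B12.2) (mass in1 a has_p) (mass in2 b has_p).

Lemma sum_series_pairs (V : lmodType R) (F : {set T} * {set T} -> V) :
  \sum_(B12 | series_pair Bs1 Bs2 B12) w B12 *: F B12
  = \sum_(B1 in Bs1) \sum_(B2 in Bs2) w (B1, B2) *: F (B1, B2).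
Proof.
rewrite pair_big /=.
rewrite [RHS](bigID (fun B12 : {set T} * {set T} => [disjoint B12.1 & B12.2])) /=.
rewrite [X in _ = _ + X]big1 ?addr0 => [|[B1 B2] /= /andP[/andP[B1Bs B2Bs] meet]].
  by apply: eq_big => [B12|[B1 B2] _] //; rewrite /series_pair andbA.
have /andP[pB1 pB2] := meet_bases_at M1 M2 E12 B1Bs B2Bs meet.
by rewrite /w /= pB1 pB2 mulr0 scale0r.
Qed.

Lemma series_coupling_l (V : lmodType R) (g : {set T} -> V) :
  \sum_(B12 | series_pair Bs1 Bs2 B12) w B12 *: g B12.1 = \sum_(B in Bs1) a B *: g B.
Proof.
rewrite sum_series_pairs; apply: eq_bigr => B1 B1Bs /=; rewrite -scaler_suml.
by congr (_ *: _); apply: (coupling_row_sum a0 b0 a1 b1 mass_cut).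
Qed.

Lemma series_coupling_r (V : lmodType R) (g : {set T} -> V) :
  \sum_(B12 | series_pair Bs1 Bs2 B12) w B12 *: g B12.2 = \sum_(B in Bs2) b B *: g B.
Proof.
rewrite sum_series_pairs exchange_big; apply: eq_bigr => B2 B2Bs /=; rewrite -scaler_suml.
by congr (_ *: _); apply: (coupling_col_sum a0 b0 a1 b1 mass_cut).
Qed.

Lemma series_proj_onto : exists2 x, base_polytope R (E1 :|: E2) (series_bases Bs1 Bs2) x &
  [ffun e => f x (inl e)] = \sum_(B in Bs1) a B *: indic R E1 B /\
  [ffun e => f x (inr e)] = \sum_(B in Bs2) b B *: indic R E2 B.
Proof.
pose x := \sum_(B12 | series_pair Bs1 Bs2 B12)
  w B12 *: indic R (E1 :|: E2) (B12.1 :|: B12.2).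
have fx : f x = \sum_(B12 | series_pair Bs1 Bs2 B12)
  w B12 *: pair_indic R E1 E2 B12.1 B12.2.
  by rewrite series_proj_sum; apply: eq_bigr => B12 sp; rewrite series_proj_indic.
exists x.
  apply/(base_polytopeE (series_basis_sub M1 M2)); apply: conv_bases_comb.
  - exact: series_pair_basis.
  - move=> B12; rewrite /w mulr_ge0 ?mulr_ge0 //.
    by apply: coupling_factor_ge0; rewrite ?mass_ge0.
  - have := series_coupling_l (fun=> 1 : R^o); rewrite -!scaler_suml a1 scale1r => <-.
    by rewrite [RHS]mulr1.
rewrite fx sum_inl sum_inr.
under eq_bigr do rewrite pair_indic_inl.
under [in X in _ /\ X]eq_bigr do rewrite pair_indic_inr.
by rewrite series_coupling_l series_coupling_r.
Qed.

End SeriesOnto.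

Lemma prod_cut_sub_image (R : realFieldType) (T : finType) (E1 E2 : {set T})
  (Bs1 Bs2 : {set {set T}}) (p : T) (p1 : {x : T | x \in E1}) (p2 : {x : T | x \in E2})
  (y : dsum_vec R E1 E2) :
  is_matroid E1 Bs1 -> is_matroid E2 Bs2 -> E1 :&: E2 = [set p] ->
  val p1 = p -> val p2 = p ->
  prod_cut (base_polytope R E1 Bs1) (base_polytope R E2 Bs2) p1 p2 y ->
  exists2 x, base_polytope R (E1 :|: E2) (series_bases Bs1 Bs2) x &
    series_proj p E1 E2 (rk Bs1) (rk Bs2) x = y.
Proof.
move=> M1 M2 E12 vp1 vp2 [/(base_polytopeE (matroid_basis_sub M1)) [a [a0 a1 ya]]].
move=> /(base_polytopeE (matroid_basis_sub M2)) [b [b0 b1 yb]] cut.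
have mass_l : y (inl p1) = mass (fun B => B \in Bs1) a (fun B => p \in B).
  move/ffunP/(_ p1): ya; rewrite ffunE => ->.
  by rewrite sum_ffunE; apply: eq_bigr => B _; rewrite !ffunE vp1.
have mass_r : y (inr p2) = mass (fun B => B \in Bs2) b (fun B => p \in B).
  move/ffunP/(_ p2): yb; rewrite ffunE => ->.
  by rewrite sum_ffunE; apply: eq_bigr => B _; rewrite !ffunE vp2.
rewrite mass_l mass_r in cut.
have [x Px [fx_l fx_r]] := series_proj_onto M1 M2 E12 a0 b0 a1 b1 cut.
by exists x => //; apply: dsum_vecP; rewrite ?fx_l ?fx_r.
Qed.

Theorem lemma3p6 (R : realFieldType) (T : finType) (E1 E2 : {set T})
  (Bs1 Bs2 : {set {set T}}) (p : T)
  (p1 : {x : T | x \in E1}) (p2 : {x : T | x \in E2}) :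
  is_matroid E1 Bs1 -> is_matroid E2 Bs2 ->
  E1 :&: E2 = [set p] ->
  ~ (is_coloop Bs1 p /\ is_coloop Bs2 p) ->
  val p1 = p -> val p2 = p ->
  lin_iso (base_polytope R (E1 :|: E2) (series_bases Bs1 Bs2))
          (prod_cut (base_polytope R E1 Bs1) (base_polytope R E2 Bs2) p1 p2).
Proof.
(* If [p] is a coloop of both matroids then both polytopes are empty. *)
move=> M1 M2 E12 _ vp1 vp2.
exists (series_proj p E1 E2 (rk Bs1) (rk Bs2)); split.
- exact: series_proj_linear.
- exact: series_proj_inj.
- move=> y; split; first exact: prod_cut_sub_image.
  by case=> x Px <-; apply: series_proj_cut.
Qed.
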